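(* Let $n\ge 2$, $s=n^2-1$. Let $G\in\mathbb{C}^{s\times s}$ be antisymmetric (regarded as a matrix of operators by attaching the identity operator to each entry), and let $x=(x_1,\dots,x_s)^T$ be a vector of linearly independent operators on $\mathbb{C}^n$ (such as the generalized Gell-Mann matrices). If $$G\,\Theta^-(x)+\Theta^-(x)\,G^T-\Theta^-(Gx)=0,$$ then there exists $g$ such that $G=\Theta^-(g)$, and this $g$ is unique and given by $$g=-\frac{1}{n}\begin{pmatrix}\mathrm{Tr}(F_1G)\\ \vdots\\ \mathrm{Tr}(F_sG)\end{pmatrix}.$$ Conversely, if $G=\Theta^-(g)$ for some $g$, then $G\Theta^-(x)+\Theta^-(x)G^T-\Theta^-(Gx)=0$ holds for every vector $x$ of $s$ operators.
   Context: Let $\lambda_1,\dots,\lambda_s$ be the generalized Gell-Mann matrices (a basis of traceless Hermitian $n\times n$ matrices with $\mathrm{Tr}(\lambda_i\lambda_j)=2\delta_{ij}$), with real structure constants $f_{ijk}$ (completely antisymmetric) and $d_{ijk}$ (completely symmetric) defined by $[\lambda_i,\lambda_j]=2\mathbf{i}\sum_k f_{ijk}\lambda_k$, $\lambda_i\lambda_j+\lambda_j\lambda_i=\frac{4}{n}\delta_{ij}I+2\sum_k d_{ijk}\lambda_k$. $F_i\in\mathbb{R}^{s\times s}$ has entries $(F_i)_{jk}=f_{ijk}$. For a vector $\beta$ of $s$ complex numbers or operators, $\Theta^-(\beta)$ is the $s\times s$ array whose $j$-th column is $F_j^T\beta$, i.e. $\Theta^-(\beta)_{ij}=\sum_k f_{ijk}\beta_k$.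 Products of complex matrices with operator arrays are taken entrywise with the identity operator attached to complex entries. *)

From mathcomp Require Import all_boot all_algebra complex reals.
Set Implicit Arguments. Unset Strict Implicit. Unset Printing Implicit Defensive.
Import GRing.Theory Num.Theory.
Local Open Scope ring_scope.
Local Open Scope complex_scope.

Definition sdim (n : nat) : nat := (n ^ 2 - 1)%N.

Section Defs.
Variables (R : realType) (n : nat).
Local Notation s := (sdim n).
Local Notation C := (R[i]).

Definition gellmann_data (lam : 'I_s -> 'M[C]_n) (f : 'I_s -> 'I_s -> 'I_s -> R) : Prop :=
  [/\ (forall a, map_mx conjc (lam a)^T = lam a),
      (forall a, \tr (lam a) = 0),
      (forall a b, \tr (lam a *m lam b) = 2 * (a == b)%:R)
    & (forall a b, lam a *m lam b - lam b *m lam a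
                   = (2 * 'i) *: \sum_k ((f a b k)%:C *: lam k))].

Definition structF (f : 'I_s -> 'I_s -> 'I_s -> R) (a : 'I_s) : 'M[C]_s :=
  \matrix_(j, k) (f a j k)%:C.

Definition Theta (f : 'I_s -> 'I_s -> 'I_s -> R) (g : 'cV[C]_s) : 'M[C]_s :=
  \matrix_(a, b) \sum_k (f a b k)%:C * g k 0.

Definition ThetaOp (f : 'I_s -> 'I_s -> 'I_s -> R) (x : 'I_s -> 'M[C]_n)
  : 'I_s -> 'I_s -> 'M[C]_n :=
  fun a b => \sum_k (f a b k)%:C *: x k.

Definition applyOp (G : 'M[C]_s) (x : 'I_s -> 'M[C]_n) : 'I_s -> 'M[C]_n :=
  fun l => \sum_m G l m *: x m.

(* entrywise: G Theta^-(x) + Theta^-(x) G^T - Theta^-(G x) = 0 *)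
Definition theta_eq (f : 'I_s -> 'I_s -> 'I_s -> R) (G : 'M[C]_s) (x : 'I_s -> 'M[C]_n) : Prop :=
  forall a b,
    \sum_k G a k *: ThetaOp f x k b + \sum_k G b k *: ThetaOp f x a k
    - ThetaOp f (applyOp G x) a b = 0.

Definition lin_indep (x : 'I_s -> 'M[C]_n) : Prop :=
  forall c : 'I_s -> C, \sum_k c k *: x k = 0 -> forall k, c k = 0.

Definition gform (f : 'I_s -> 'I_s -> 'I_s -> R) (G : 'M[C]_s) : 'cV[C]_s :=
  \col_a (- (n%:R)^-1 * \tr (structF f a *m G)).

End Defs.

(* Write F_a for the matrix (f a j k)_{j,k}.  The structure constants of a Gell-Mann basis
   satisfy the Jacobi identity and \sum_{j,k} f_ajk f_bjk = n delta_ab: the latter follows from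
   the completeness relation \sum_k (lam_k)_pq (lam_k)_rt = 2 delta_pt delta_qr
   - (2/n) delta_pq delta_rt, which holds because 1, lam_1, ..., lam_s is a basis of the
   n x n matrices.  As the x_k are linearly independent, the operator equation says exactly
   that G is a derivation of the Lie algebra with structure constants f, and Theta^-(g) is the
   inner derivation ad g.  Since the Killing form is nondegenerate, a derivation D with
   \tr (F_a D) = 0 for all a vanishes; applied to G - Theta^-(g) for g = gform f G this gives
   existence, while \tr (F_a Theta^-(g)) = -n g_a gives uniqueness. *)

From mathcomp Require Import all_boot all_algebra complex reals.
From mathcomp Require Import ring.
Import GRing.Theory Num.Theory.
Local Open Scope ring_scope.
Local Open Scope complex_scope.

Set Implicit Arguments.
Unset Strict Implicit.
Unset Printing Implicit Defensive.

Lemma sum_delta_mull (R : pzSemiRingType) m (F : 'I_m -> R) i :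
  \sum_j (j == i)%:R * F j = F i.
Proof. by rewrite (bigD1 i) //= eqxx mul1r big1 ?addr0 // => j /negbTE->; rewrite mul0r. Qed.

Lemma mxtrace_sum (R : pzSemiRingType) m I (r : seq I) (P : pred I) (F : I -> 'M[R]_m) :
  \tr (\sum_(i <- r | P i) F i) = \sum_(i <- r | P i) \tr (F i).
Proof. exact: raddf_sum. Qed.

Lemma mxtraceB (R : pzRingType) m (A B : 'M[R]_m) : \tr (A - B) = \tr A - \tr B.
Proof. exact: raddfB. Qed.

Lemma mxtraceN (R : pzRingType) m (A : 'M[R]_m) : \tr (- A) = - \tr A.
Proof. exact: raddfN. Qed.

Lemma mxtrace_rot (R : comPzRingType) m (A B C D : 'M[R]_m) :
  \tr (A *m B *m C *m D) = \tr (D *m A *m B *m C).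
Proof. by rewrite mxtrace_mulC !mulmxA. Qed.

Lemma mxtrace_deltaM (R : pzSemiRingType) m (i j : 'I_m) (B : 'M[R]_m) :
  \tr (delta_mx i j *m B) = B j i.
Proof.
rewrite /mxtrace (bigD1 i) //= big1 ?addr0 => [|k /negbTE ki].
  rewrite mxE (bigD1 j) //= big1 ?addr0 => [|l /negbTE lj]; first by rewrite !mxE !eqxx mul1r.
  by rewrite mxE lj andbF mul0r.
by rewrite mxE big1 // => l _; rewrite mxE ki mul0r.
Qed.

Lemma mxtrace_delta (R : pzSemiRingType) m (i j : 'I_m) :
  \tr (delta_mx i j : 'M[R]_m) = (i == j)%:R.
Proof. by rewrite -[delta_mx i j]mulmx1 mxtrace_deltaM mxE eq_sym. Qed.

Section StructureConstants.
Variables (K : fieldType) (s : nat) (f : 'I_s -> 'I_s -> 'I_s -> K) (kappa : K).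
Hypothesis f_cycle : forall a b c, f b c a = f a b c.
Hypothesis f_antisym : forall a b c, f b a c = - f a b c.
Hypothesis f_jacobi : forall a b c l,
  \sum_k (f a b k * f k c l + f b c k * f k a l + f c a k * f k b l) = 0.
Hypothesis f_killing : forall a b, \sum_j \sum_k f a j k * f b j k = kappa * (a == b)%:R.
Hypothesis kappa_neq0 : kappa != 0.

Definition strmx a : 'M[K]_s := \matrix_(j, k) f a j k.

Definition ad_mx (g : 'cV[K]_s) : 'M[K]_s := \matrix_(a, b) \sum_k f a b k * g k 0.

Definition ad_coords (D : 'M[K]_s) : 'cV[K]_s := \col_a (- kappa^-1 * \tr (strmx a *m D)).

(* With D e_a = \sum_k D a k e_k and [e_a, e_b] = \sum_k f a b k e_k, this is
   the (b, l) entry is the coefficient of e_l in D [e_a, e_b] = [D e_a, e_b] + [e_a, D e_b]. *)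
Definition is_derivation (D : 'M[K]_s) :=
  forall a, \sum_k D a k *: strmx k = strmx a *m D - D *m strmx a.

Lemma f_antisym_r a b c : f a c b = - f a b c.
Proof. by rewrite -[LHS]f_cycle f_antisym f_cycle. Qed.

Lemma strmx_commutator a b :
  strmx a *m strmx b - strmx b *m strmx a = - \sum_k f a b k *: strmx k.
Proof.
apply/matrixP => c l; rewrite !mxE summxE -sumrN -big_split /=.
apply/eqP; rewrite -subr_eq0 opprK -big_split /=; apply/eqP.
rewrite -[RHS](f_jacobi a b c l).
apply: eq_bigr => k _; rewrite !mxE.
by rewrite (f_antisym a k l) (f_antisym a c k) (f_antisym b k l); ring.
Qed.

Lemma tr_strmxM a b : \tr (strmx a *m strmx b) = - kappa * (a == b)%:R.
Proof.
rewrite mulNr -f_killing -sumrN; apply: eq_bigr => j _; rewrite !mxE -sumrN.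
by apply: eq_bigr => k _; rewrite !mxE (f_antisym_r b j k) mulrN.
Qed.

Lemma ad_mxE g : ad_mx g = \sum_k g k 0 *: strmx k.
Proof.
apply/matrixP => a b; rewrite !mxE summxE; apply: eq_bigr => k _.
by rewrite !mxE f_cycle mulrC.
Qed.

Lemma ad_mx_derivation g : is_derivation (ad_mx g).
Proof.
move=> a; rewrite ad_mxE mulmx_sumr mulmx_suml -sumrB.
under [RHS]eq_bigr do rewrite -scalemxAr -scalemxAl -scalerBr strmx_commutator.
under [LHS]eq_bigr do rewrite summxE scaler_suml.
rewrite exchange_big; apply: eq_bigr => m _.
rewrite scalerN scaler_sumr -sumrN; apply: eq_bigr => k _.
by rewrite !mxE scalerA f_antisym mulrN scaleNr.
Qed.

Lemma derivationB D E : is_derivation D -> is_derivation E -> is_derivation (D - E).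
Proof.
move=> hD hE a; rewrite mulmxBr mulmxBl.
under eq_bigr do rewrite !mxE scalerBl.
by rewrite sumrB hD hE !opprD !opprK addrACA.
Qed.

Lemma tr_strmx_ad_mx g a : \tr (strmx a *m ad_mx g) = - kappa * g a 0.
Proof.
rewrite ad_mxE mulmx_sumr mxtrace_sum -(sum_delta_mull (fun k => - kappa * g k 0) a).
apply: eq_bigr => k _; rewrite -scalemxAr mxtraceZ tr_strmxM eq_sym; ring.
Qed.

Lemma derivation_eq0 D :
  is_derivation D -> (forall a, \tr (strmx a *m D) = 0) -> D = 0.
Proof.
(* -kappa D c d = \tr ((\sum_b D c b *: F_b) F_d) = \tr (D [F_d, F_c]), a combination of
   the \tr (F_j D). *)
move=> hD hD0; apply/matrixP => c d; rewrite mxE.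
have nkappa : - kappa != 0 by rewrite oppr_eq0.
apply: (mulfI nkappa); rewrite mulr0.
transitivity (\tr ((\sum_b D c b *: strmx b) *m strmx d)).
  rewrite mulmx_suml mxtrace_sum -(sum_delta_mull (fun b => - kappa * D c b) d).
  by apply: eq_bigr => b _; rewrite -scalemxAl mxtraceZ tr_strmxM; ring.
rewrite hD mulmxBl mxtraceB -mulmxA mxtrace_mulC -!mulmxA -mxtraceB -mulmxBr.
rewrite -opprB strmx_commutator opprK mulmx_sumr mxtrace_sum.
by apply: big1 => j _; rewrite -scalemxAr mxtraceZ mxtrace_mulC hD0 mulr0.
Qed.

Lemma derivation_ad_coords D : is_derivation D -> D = ad_mx (ad_coords D).
Proof.
move=> hD; apply/eqP; rewrite -subr_eq0; apply/eqP/derivation_eq0.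
  exact/derivationB/ad_mx_derivation.
move=> a; rewrite mulmxBr mxtraceB tr_strmx_ad_mx mxE.
by rewrite mulrA mulrNN mulfV // mul1r subrr.
Qed.

Lemma ad_coordsK g : ad_coords (ad_mx g) = g.
Proof.
apply/matrixP => a z; rewrite ord1 mxE tr_strmx_ad_mx.
by rewrite mulrA mulrNN mulVf // mul1r.
Qed.

Section OperatorVectors.
Variables (V : lmodType K) (x : 'I_s -> V).

Lemma theta_defectE (G : 'M[K]_s) a b :
  \sum_k G a k *: (\sum_l f k b l *: x l) + \sum_k G b k *: (\sum_l f a k l *: x l)
  - \sum_k f a b k *: (\sum_l G k l *: x l)
  = \sum_l (\sum_k G a k *: strmx k - (strmx a *m G - G *m strmx a)) b l *: x l.
Proof.
have sum_coef (c : 'I_s -> K) (H : 'I_s -> 'I_s -> K) :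
    \sum_k c k *: (\sum_l H k l *: x l) = \sum_l (\sum_k c k * H k l) *: x l.
  under eq_bigr do rewrite scaler_sumr; rewrite exchange_big.
  by apply: eq_bigr => l _; rewrite scaler_suml; apply: eq_bigr => k _; rewrite scalerA.
rewrite !sum_coef -big_split -sumrB /=; apply: eq_bigr => l _.
rewrite -scalerDl -scalerBl; congr (_ *: _); rewrite !mxE summxE.
by rewrite opprB addrA; congr (_ + _ - _); apply: eq_bigr => k _; rewrite !mxE.
Qed.

Lemma derivation_theta_eq (G : 'M[K]_s) a b : is_derivation G ->
  \sum_k G a k *: (\sum_l f k b l *: x l) + \sum_k G b k *: (\sum_l f a k l *: x l)
  - \sum_k f a b k *: (\sum_l G k l *: x l) = 0.
Proof. by move=> hG; rewrite theta_defectE hG subrr; apply: big1 => l _; rewrite mxE scale0r. Qed.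

Lemma theta_eq_derivation (G : 'M[K]_s) :
  (forall c : 'I_s -> K, \sum_l c l *: x l = 0 -> forall l, c l = 0) ->
  (forall a b, \sum_k G a k *: (\sum_l f k b l *: x l)
     + \sum_k G b k *: (\sum_l f a k l *: x l)
     - \sum_k f a b k *: (\sum_l G k l *: x l) = 0) ->
  is_derivation G.
Proof.
move=> x_indep hG a; apply/eqP; rewrite -subr_eq0; apply/eqP/matrixP => b l.
by rewrite [RHS]mxE; move: l; apply: x_indep; rewrite -theta_defectE hG.
Qed.

End OperatorVectors.

End StructureConstants.

Definition mxcomm (R : pzRingType) m (A B : 'M[R]_m) := A *m B - B *m A.

Lemma tr_mxcomm (R : comPzRingType) m (A B : 'M[R]_m) : \tr (mxcomm A B) = 0.
Proof. by rewrite mxtraceB mxtrace_mulC subrr. Qed.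

Lemma oppr_mxcomm (R : pzRingType) m (A B : 'M[R]_m) : - mxcomm A B = mxcomm B A.
Proof. by rewrite /mxcomm opprB. Qed.

Lemma mxcommZl (R : comPzRingType) m (x : R) (A B : 'M[R]_m) :
  mxcomm (x *: A) B = x *: mxcomm A B.
Proof. by rewrite /mxcomm -scalemxAl -scalemxAr scalerBr. Qed.

Lemma mxcomm_suml (R : pzRingType) m I (r : seq I) (P : pred I) (F : I -> 'M[R]_m) B :
  mxcomm (\sum_(i <- r | P i) F i) B = \sum_(i <- r | P i) mxcomm (F i) B.
Proof. by rewrite /mxcomm mulmx_suml mulmx_sumr -sumrB. Qed.

Lemma tr_mxcommM (R : comPzRingType) m (A B J : 'M[R]_m) :
  \tr (mxcomm A J *m mxcomm B J)
  = \tr (A *m (J *m B *m J)) + \tr (B *m (J *m A *m J)) - \tr ((A *m B + B *m A) *m (J *m J)).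
Proof.
rewrite /mxcomm mulmxBl !mulmxBr mulmxDl !mxtraceB !mxtraceD !mulmxA.
rewrite (mxtrace_rot J A J B) (mxtrace_rot A J J B) -(mxtrace_rot A B J J).
by ring.
Qed.

Lemma mxcomm_jacobi (R : pzRingType) m (A B C : 'M[R]_m) :
  mxcomm (mxcomm A B) C + mxcomm (mxcomm B C) A + mxcomm (mxcomm C A) B = 0.
Proof.
rewrite /mxcomm !mulmxBl !mulmxBr !mulmxA.
set x1 := A *m B *m C; set x2 := B *m A *m C; set x3 := C *m A *m B.
set x4 := C *m B *m A; set x5 := B *m C *m A; set x6 := A *m C *m B.
rewrite !opprB !addrA -!(addrAC _ x2) addrK -!(addrAC _ (- x4)) subrK.
rewrite -!(addrAC _ (- x1)) subrr add0r -!(addrAC _ x3) addNr add0r.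
by rewrite addrK subrr.
Qed.

Section GellMannBasis.
Variables (K : fieldType) (n : nat).
Local Notation s := (sdim n).
Variable lam : 'I_s -> 'M[K]_n.
Hypothesis n_neq0 : (n%:R : K) != 0.
Hypothesis two_neq0 : (2 : K) != 0.
Hypothesis tr_lam : forall a, \tr (lam a) = 0.
Hypothesis tr_lamM : forall a b, \tr (lam a *m lam b) = 2 * (a == b)%:R.

Lemma tr_lam_sumM (c : 'I_s -> K) m : \tr ((\sum_k c k *: lam k) *m lam m) = 2 * c m.
Proof.
rewrite mulmx_suml mxtrace_sum -(sum_delta_mull (fun k => 2 * c k) m).
by apply: eq_bigr => k _; rewrite -scalemxAl mxtraceZ tr_lamM; ring.
Qed.

Lemma lam_free (c : 'I_s -> K) : \sum_k c k *: lam k = 0 -> forall m, c m = 0.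
Proof.
by move=> hc m; apply: (mulfI two_neq0); rewrite mulr0 -tr_lam_sumM hc mul0mx mxtrace0.
Qed.

Lemma tr_lam_combM d (c : 'I_s -> K) m :
  \tr ((d *: 1%:M + \sum_k c k *: lam k) *m lam m) = 2 * c m.
Proof.
by rewrite mulmxDl mxtraceD -scalemxAl mul1mx mxtraceZ tr_lam mulr0 add0r tr_lam_sumM.
Qed.

Lemma tr_lam_comb d (c : 'I_s -> K) : \tr (d *: 1%:M + \sum_k c k *: lam k) = d * n%:R.
Proof.
rewrite mxtraceD mxtrace_sum mxtraceZ mxtrace1 big1 ?addr0 // => k _.
by rewrite mxtraceZ tr_lam mulr0.
Qed.

Definition lam_basis (i : 'I_s.+1) : 'M[K]_n :=
  if unlift ord0 i is Some k then lam k else 1%:M.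

Lemma sum_lam_basis (c : 'I_s.+1 -> K) :
  \sum_i c i *: lam_basis i = c ord0 *: 1%:M + \sum_k c (lift ord0 k) *: lam k.
Proof.
rewrite big_ord_recl /lam_basis unlift_none; congr (_ + _).
by apply: eq_bigr => k _; rewrite liftK.
Qed.

Lemma sdimS : s.+1 = (n * n)%N.
Proof.
have n_gt0 : (0 < n)%N by rewrite lt0n; apply: contraNneq n_neq0 => ->.
by rewrite /sdim subn1 prednK ?mulnn // expn_gt0 n_gt0.
Qed.

Lemma lam_span (M : 'M[K]_n) :
  exists d (c : 'I_s -> K), M = d *: 1%:M + \sum_k c k *: lam k.
Proof.
pose X := mktuple lam_basis.
have XE (c : 'I_s.+1 -> K) :
    \sum_i c i *: X`_i = c ord0 *: 1%:M + \sum_k c (lift ord0 k) *: lam k.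
  by rewrite -sum_lam_basis; apply: eq_bigr => i _; rewrite -tnth_nth tnth_mktuple.
have freeX : free X.
  apply/freeP => c; rewrite XE => c_eq0.
  have c_lift m : c (lift ord0 m) = 0.
    apply: (mulfI two_neq0); rewrite mulr0.
    by rewrite -(tr_lam_combM (c ord0) (c \o lift ord0)) c_eq0 mul0mx mxtrace0.
  have c0 : c ord0 = 0.
    apply: (mulIf n_neq0); rewrite mul0r.
    by rewrite -(tr_lam_comb (c ord0) (c \o lift ord0)) c_eq0 mxtrace0.
  by move=> i; case: (unliftP ord0 i) => [j ->|->].
have spanX : M \in <<X>>%VS.
  suff /eqP-> : (<<X>> == fullv)%VS by apply: memvf.
  by rewrite eqEdim subvf dimvf (eqP freeX) size_tuple dim_matrix sdimS /=.
exists (coord X ord0 M), (fun k => coord X (lift ord0 k) M).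
by rewrite {1}(coord_span spanX) XE.
Qed.

Lemma lam_expansion (M : 'M[K]_n) :
  M = (\tr M / n%:R) *: 1%:M + \sum_k (\tr (M *m lam k) / 2) *: lam k.
Proof.
have [d [c ->]] := lam_span M.
rewrite tr_lam_comb mulfK //; congr (_ + _); apply: eq_bigr => k _.
by rewrite tr_lam_combM [2 * _]mulrC mulfK.
Qed.

Lemma sum_tr_lamM (A B : 'M[K]_n) :
  \sum_k \tr (A *m lam k) * \tr (B *m lam k)
  = 2 * \tr (A *m B) - 2 / n%:R * (\tr A * \tr B).
Proof.
have trAB : \tr (A *m B)
    = \tr A / n%:R * \tr B + \sum_k \tr (A *m lam k) / 2 * \tr (B *m lam k).
  rewrite {1}[A]lam_expansion mulmxDl mulmx_suml mxtraceD mxtrace_sum.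
  rewrite -scalemxAl mul1mx mxtraceZ; congr (_ + _); apply: eq_bigr => k _.
  by rewrite -scalemxAl mxtraceZ [\tr (lam k *m B)]mxtrace_mulC.
rewrite trAB; under [in RHS]eq_bigr do rewrite mulrAC.
by rewrite -mulr_suml; field; rewrite n_neq0 two_neq0.
Qed.

Lemma lam_completeness p q r t :
  \sum_k lam k p q * lam k r t
  = 2 * ((p == t)%:R * (q == r)%:R) - 2 / n%:R * ((q == p)%:R * (t == r)%:R).
Proof.
under eq_bigr do rewrite -(mxtrace_deltaM q p) -(mxtrace_deltaM t r).
rewrite sum_tr_lamM mul_delta_mx_cond raddfMn /= !mxtrace_delta.
by rewrite [(p == t)%:R * _]mulr_natl.
Qed.

Lemma sum_lam_conj (X : 'M[K]_n) :
  \sum_j lam j *m X *m lam j = (2 * \tr X) *: 1%:M - (2 / n%:R) *: X.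
Proof.
apply/matrixP => p t; rewrite summxE.
transitivity (\sum_q \sum_r X q r * \sum_j lam j p q * lam j r t).
  under eq_bigr do rewrite mxE; under eq_bigr do under eq_bigr do rewrite mxE big_distrl.
  rewrite exchange_big; under eq_bigr do rewrite exchange_big; rewrite exchange_big.
  apply: eq_bigr => q _; apply: eq_bigr => r _; rewrite big_distrr.
  by apply: eq_bigr => j _; rewrite /=; ring.
under eq_bigr do under eq_bigr do rewrite lam_completeness mulrBr.
under eq_bigr do rewrite sumrB; rewrite sumrB !mxE; congr (_ - _).
  transitivity (\sum_q 2 * (p == t)%:R * X q q).
    apply: eq_bigr => q _; rewrite -(sum_delta_mull (fun r => 2 * (p == t)%:R * X q r) q).
    by apply: eq_bigr => r _; rewrite [r == q]eq_sym; ring.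
  by rewrite -big_distrr mulrAC.
rewrite -(sum_delta_mull (fun q => 2 / n%:R * X q t) p).
apply: eq_bigr => q _; rewrite -(sum_delta_mull (fun r => (q == p)%:R * (2 / n%:R * X q r)) t).
by apply: eq_bigr => r _; rewrite [t == r]eq_sym; ring.
Qed.

Lemma sum_lam_sq : \sum_j lam j *m lam j = (2 * n%:R - 2 / n%:R) *: 1%:M.
Proof.
rewrite (eq_bigr (fun j => lam j *m 1%:M *m lam j)) => [|j _]; last by rewrite mulmx1.
by rewrite sum_lam_conj mxtrace1 scalerBl scalemx1.
Qed.

Lemma four_neq0 : (4 : K) != 0.
Proof. by rewrite (_ : 4 = 2 * 2) ?mulf_neq0 // -natrM. Qed.

Variables (ii : K) (phi : 'I_s -> 'I_s -> 'I_s -> K).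
Hypothesis ii2 : ii * ii = -1.
Hypothesis lam_commutator : forall a b,
  mxcomm (lam a) (lam b) = (2 * ii) *: \sum_k (phi a b k *: lam k).

Lemma four_ii_neq0 : 4 * ii != 0.
Proof.
rewrite mulf_neq0 ?four_neq0 //; apply: contra_eqN ii2 => /eqP->.
by rewrite mul0r eq_sym oppr_eq0 oner_eq0.
Qed.

Lemma tr_lam_commM a b c : \tr (mxcomm (lam a) (lam b) *m lam c) = 4 * ii * phi a b c.
Proof. by rewrite lam_commutator -scalemxAl mxtraceZ tr_lam_sumM; ring. Qed.

Lemma phi_cycle a b c : phi b c a = phi a b c.
Proof.
apply: (mulfI four_ii_neq0); rewrite -!tr_lam_commM /mxcomm !mulmxBl !mxtraceB.
by congr (_ - _); [rewrite mxtrace_mulC mulmxA | rewrite -mulmxA mxtrace_mulC].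
Qed.

Lemma phi_antisym a b c : phi b a c = - phi a b c.
Proof.
apply: (mulfI four_ii_neq0).
by rewrite mulrN -!tr_lam_commM -oppr_mxcomm mulNmx mxtraceN.
Qed.

Lemma mxcomm2_lam a b c : mxcomm (mxcomm (lam a) (lam b)) (lam c)
  = \sum_l (- 4 * \sum_k phi a b k * phi k c l) *: lam l.
Proof.
rewrite lam_commutator mxcommZl mxcomm_suml.
under eq_bigr do rewrite mxcommZl lam_commutator scalerA scaler_sumr.
rewrite scaler_sumr; under eq_bigr do rewrite scaler_sumr.
rewrite exchange_big; apply: eq_bigr => l _.
under eq_bigr do rewrite !scalerA; rewrite -scaler_suml; congr (_ *: _).
have -> : (-4 : K) = 4 * (ii * ii) by rewrite ii2 mulrN1.
by rewrite big_distrr; apply: eq_bigr => k _; rewrite /=; ring.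
Qed.

Lemma phi_jacobi a b c l :
  \sum_k (phi a b k * phi k c l + phi b c k * phi k a l + phi c a k * phi k b l) = 0.
Proof.
have := mxcomm_jacobi (lam a) (lam b) (lam c).
rewrite !mxcomm2_lam -!big_split /=; under eq_bigr do rewrite -!scalerDl.
move=> /lam_free/(_ l)/eqP; rewrite -!mulrDr -!big_split /=.
by rewrite mulf_eq0 oppr_eq0 (negbTE four_neq0) => /eqP.
Qed.

Lemma phi_killing a b : \sum_j \sum_k phi a j k * phi b j k = n%:R * (a == b)%:R.
Proof.
have sum_phi2 j : - 16 * \sum_k phi a j k * phi b j k
    = 2 * \tr (mxcomm (lam a) (lam j) *m mxcomm (lam b) (lam j)).
  have := sum_tr_lamM (mxcomm (lam a) (lam j)) (mxcomm (lam b) (lam j)).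
  rewrite !tr_mxcomm mulr0 mulr0 subr0 => <-.
  have -> : (- 16 : K) = 16 * (ii * ii) by rewrite ii2 mulrN1.
  by rewrite big_distrr; apply: eq_bigr => k _; rewrite !tr_lam_commM /=; ring.
have sum_trace : \sum_j \tr (mxcomm (lam a) (lam j) *m mxcomm (lam b) (lam j))
    = - 8 * n%:R * (a == b)%:R.
  under eq_bigr do rewrite tr_mxcommM.
  rewrite sumrB big_split /= -!mxtrace_sum -!mulmx_sumr !sum_lam_conj sum_lam_sq.
  rewrite !tr_lam !mulr0 !scale0r !sub0r !mulmxN -!scalemxAr mulmx1 !mxtraceN !mxtraceZ.
  by rewrite mxtraceD !tr_lamM [b == a]eq_sym; field.
have m16_neq0 : (- 16 : K) != 0.
  by rewrite oppr_eq0 (_ : 16 = 4 * 4) ?mulf_neq0 ?four_neq0 // -natrM.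
apply: (mulfI m16_neq0); rewrite mulr_sumr; under eq_bigr do rewrite sum_phi2.
by rewrite -mulr_sumr sum_trace; ring.
Qed.

Lemma gellmann_structure_constants :
  [/\ forall a b c, phi b c a = phi a b c,
      forall a b c, phi b a c = - phi a b c,
      forall a b c l,
        \sum_k (phi a b k * phi k c l + phi b c k * phi k a l + phi c a k * phi k b l) = 0
    & forall a b, \sum_j \sum_k phi a j k * phi b j k = n%:R * (a == b)%:R].
Proof.
by split; [exact: phi_cycle | exact: phi_antisym | exact: phi_jacobi | exact: phi_killing].
Qed.

End GellMannBasis.

Unset Implicit Arguments.
Set Strict Implicit.

Theorem lemma3 (R : realType) (n : nat) (hn : (2 <= n)%N)
    (lam : 'I_(sdim n) -> 'M[R[i]]_n) (f : 'I_(sdim n) -> 'I_(sdim n) -> 'I_(sdim n) -> R)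
    (Hlam : gellmann_data lam f) :
  (forall (G : 'M[R[i]]_(sdim n)) (x : 'I_(sdim n) -> 'M[R[i]]_n),
      G^T = - G -> lin_indep x -> theta_eq f G x ->
      (exists g : 'cV[R[i]]_(sdim n), G = Theta f g) /\
      (forall g : 'cV[R[i]]_(sdim n), G = Theta f g -> g = gform f G))
  /\
  (forall (G : 'M[R[i]]_(sdim n)) (g : 'cV[R[i]]_(sdim n)),
      G = Theta f g -> forall x : 'I_(sdim n) -> 'M[R[i]]_n, theta_eq f G x).
Proof.
(* Theta f, gform f and theta_eq f are ad_mx phi, ad_coords phi n%:R and the expressions of
   the OperatorVectors lemmas up to conversion. *)
case: Hlam => _ tr_lam tr_lamM lam_comm.
pose phi a b c : R[i] := (f a b c)%:C.
have n_neq0 : (n%:R : R[i]) != 0 by rewrite pnatr_eq0 -lt0n (leq_trans _ hn).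
have two_neq0 : (2 : R[i]) != 0 by rewrite pnatr_eq0.
have ii2 : ('i : R[i]) * 'i = -1 by rewrite -expr2 sqr_i.
have [cyc anti jac kil] :=
  gellmann_structure_constants (phi := phi) n_neq0 two_neq0 tr_lam tr_lamM ii2 lam_comm.
split=> [G x _ x_indep hG | G g -> x].
  have derG : is_derivation phi G := theta_eq_derivation x_indep hG.
  have G_ad := derivation_ad_coords cyc anti jac kil n_neq0 derG.
  split; first by exists (ad_coords phi n%:R G).
  by move=> g ->; rewrite -[LHS](ad_coordsK cyc anti kil n_neq0).
move=> a b; exact: derivation_theta_eq (ad_mx_derivation cyc anti jac g).
Qed.
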